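(* Let $\nu>0$, $\Delta v>0$, $v_j=j\Delta v$ ($j\in\mathbb{Z}$). Let $\mathcal{Q}:(f_j)_j\mapsto(\mathcal{Q}_j(f))_j$ be either of the following discrete Fokker--Planck operators: (a) (second order) $\mathcal{Q}_j(f)=\frac{1}{\Delta v}\big[f_{j+1/2}(v_{j+1/2}-\tilde u)-f_{j-1/2}(v_{j-1/2}-\tilde u)\big]+\frac{\tilde T}{\Delta v^2}(f_{j+1}-2f_j+f_{j-1})$, where $f_{j+1/2}=(f_{j+1}+f_j)/2$, $v_{j+1/2}=(v_j+v_{j+1})/2$, $n=\sum_j f_j\Delta v$, $n\tilde u=\sum_j v_{j+1/2}f_{j+1/2}\Delta v$, $n\tilde T=\sum_j(v_{j+1/2}-\tilde u)^2f_{j+1/2}\Delta v$; (b) (fourth order) $\mathcal{Q}_j(f)=\bar Q^{[4]}_j-\frac{1}{24}[Q_{j+1}-2Q_j+Q_{j-1}]$, where $Q_j$ is the operator in (a), $\breve f_{j+1/2}=-\frac1{16}f_{j-1}+\frac9{16}f_j+\frac9{16}f_{j+1}-\frac1{16}f_{j+2}$, $n\breve u=\Delta v\sum_j v_{j+1/2}\breve f_{j+1/2}$, $n\breve T=\Delta v\sum_j(v_{j+1/2}-\breve u)^2\breve f_{j+1/2}$, and $\bar Q^{[4]}_j=\frac{(v_{j+1/2}-\breve u)\breve f_{j+1/2}-(v_{j-1/2}-\breve u)\breve f_{j-1/2}}{\Delta v}+\breve T\frac{-f_{j-2}+28f_{j-1}-54f_j+28f_{j+1}-f_{j+2}}{24\Delta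 v^2}$. Discretize $\partial_t f=\nu\mathcal{Q}(f)$ in time with time step $\Delta t>0$ and $s\ge 2$ stages by either RKC1: $K^{(0)}=f^n$, $K^{(1)}=K^{(0)}+\mu_1\Delta t\,\nu\mathcal{Q}(K^{(0)})$, $K^{(\ell)}=\kappa_\ell K^{(\ell-2)}+\nu_\ell K^{(\ell-1)}+\mu_\ell\Delta t\,\nu\mathcal{Q}(K^{(\ell-1)})$ for $\ell=2,\dots,s$, $f^{n+1}=K^{(s)}$, with $\mu_1=\omega_1/\omega_0$, $\mu_\ell=2\omega_1T_{\ell-1}(\omega_0)/T_\ell(\omega_0)$, $\nu_\ell=2\omega_0T_{\ell-1}(\omega_0)/T_\ell(\omega_0)$, $\kappa_\ell=1-\nu_\ell$, $\omega_0=1+\eta/s^2$, $\omega_1=T_s(\omega_0)/T_s'(\omega_0)$, $\eta=0.05$; or RKC2: $K^{(0)}=f^n$, $K^{(1)}=K^{(0)}+\hat\mu_1\Delta t\,\nu\mathcal{Q}(K^{(0)})$, $K^{(\ell)}=(1-\hat\kappa_\ell-\hat\nu_\ell)K^{(0)}+\hat\kappa_\ell K^{(\ell-2)}+\hat\nu_\ell K^{(\ell-1)}+\hat\mu_\ell\Delta t\,\nu\mathcal{Q}(K^{(\ell-1)})-a_{\ell-1}\hat\mu_\ell\Delta t\,\nu\mathcal{Q}(K^{(0)})$ for $\ell=2,\dots,s$, $f^{n+1}=K^{(s)}$, with real coefficients $\hat\mu_\ell=2b_\ell\omega_2/b_{\ell-1}$, $\hat\nu_\ell=2b_\ell\omega_0/b_{\ell-1}$,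 $\hat\kappa_\ell=-b_\ell/b_{\ell-2}$, $b_\ell=T_\ell''(\omega_0)/(T_\ell'(\omega_0))^2$, $a_\ell=1-b_\ell T_\ell(\omega_0)$, $\omega_0=1+\eta/s^2$, $\omega_2=T_s'(\omega_0)/T_s''(\omega_0)$, $\eta=0.15$ (and $\hat\mu_1$ and any remaining low-index coefficients being fixed real constants of the method). Denote by $f^n_j$ the resulting approximation of $f(t^n,v_j)$ (assuming all sums involved converge absolutely and the moments $n,\tilde T,\breve T$ stay positive). Then for all $n\in\mathbb{N}$, $$\sum_j\begin{pmatrix}1\\ v_j\\ v_j^2/2\end{pmatrix}f^n_j=\sum_j\begin{pmatrix}1\\ v_j\\ v_j^2/2\end{pmatrix}f^0_j.$$
   Context: $T_k$ denotes the first-kind Chebyshev polynomial: $T_0(z)=1$, $T_1(z)=z$, $T_k(z)=2zT_{k-1}(z)-T_{k-2}(z)$ for $k\ge2$. These operators discretize the Fokker--Planck operator $Q(f)=\partial_v\big((v-u_f)f+T_f\partial_v f\big)$ with $u_f,T_f$ the mean velocity and temperature of $f$. *)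

From Stdlib Require Import Reals ZArith Lia.
From Coquelicot Require Import Coquelicot.
Open Scope R_scope.

Definition zsum (g : Z -> R) : R :=
  Series (fun n => g (Z.of_nat n)) + Series (fun n => g (- Z.of_nat n - 1)%Z).

Definition zsummable (g : Z -> R) : Prop :=
  ex_series (fun n => Rabs (g (Z.of_nat n))) /\
  ex_series (fun n => Rabs (g (- Z.of_nat n - 1)%Z)).

Definition vgrid (dv : R) (j : Z) : R := IZR j * dv.
Definition vhalf (dv : R) (j : Z) : R := (vgrid dv j + vgrid dv (j + 1)) / 2.

(** f_{j+1/2} = (f_{j+1} + f_j)/2, stored at index j. *)
Definition fhalf (f : Z -> R) (j : Z) : R := (f (j + 1)%Z + f j) / 2.

Definition dens (dv : R) (f : Z -> R) : R := zsum f * dv.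

Definition u2 (dv : R) (f : Z -> R) : R :=
  zsum (fun j => vhalf dv j * fhalf f j) * dv / dens dv f.
Definition T2 (dv : R) (f : Z -> R) : R :=
  zsum (fun j => (vhalf dv j - u2 dv f) ^ 2 * fhalf f j) * dv / dens dv f.

Definition Q2 (dv : R) (f : Z -> R) (j : Z) : R :=
  (fhalf f j * (vhalf dv j - u2 dv f)
   - fhalf f (j - 1) * (vhalf dv (j - 1) - u2 dv f)) / dv
  + T2 dv f / dv ^ 2 * (f (j + 1)%Z - 2 * f j + f (j - 1)%Z).

(** fourth order: breve f_{j+1/2}, stored at index j *)
Definition fbreve (f : Z -> R) (j : Z) : R :=
  - 1 / 16 * f (j - 1)%Z + 9 / 16 * f j + 9 / 16 * f (j + 1)%Z - 1 / 16 * f (j + 2)%Z.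
Definition u4 (dv : R) (f : Z -> R) : R :=
  dv * zsum (fun j => vhalf dv j * fbreve f j) / dens dv f.
Definition T4 (dv : R) (f : Z -> R) : R :=
  dv * zsum (fun j => (vhalf dv j - u4 dv f) ^ 2 * fbreve f j) / dens dv f.

Definition Qbar4 (dv : R) (f : Z -> R) (j : Z) : R :=
  ((vhalf dv j - u4 dv f) * fbreve f j
   - (vhalf dv (j - 1) - u4 dv f) * fbreve f (j - 1)) / dv
  + T4 dv f * (- f (j - 2)%Z + 28 * f (j - 1)%Z - 54 * f j + 28 * f (j + 1)%Z
               - f (j + 2)%Z) / (24 * dv ^ 2).

Definition Q4 (dv : R) (f : Z -> R) (j : Z) : R :=
  Qbar4 dv f j - 1 / 24 * (Q2 dv f (j + 1) - 2 * Q2 dv f j + Q2 dv f (j - 1)).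

Inductive op_kind := FP2 | FP4.

Definition Qop (k : op_kind) (dv : R) (f : Z -> R) : Z -> R :=
  match k with FP2 => Q2 dv f | FP4 => Q4 dv f end.

(** "all sums involved converge absolutely and the moments stay positive":
    absolute moments up to order 3 are finite, and n, T~ (and T breve) > 0. *)
Definition admissible (k : op_kind) (dv : R) (g : Z -> R) : Prop :=
  (forall p : nat, (p <= 3)%nat -> zsummable (fun j => vgrid dv j ^ p * g j)) /\
  0 < dens dv g /\ 0 < T2 dv g /\
  (match k with FP2 => True | FP4 => 0 < T4 dv g end).

Fixpoint cheb (k : nat) (z : R) : R :=
  match k with
  | O => 1
  | S k' => match k' with
            | O => z
            | S k'' => 2 * z * cheb k' z - cheb k'' z
            end
  end.
Definition cheb' (k : nat) (z : R) : R := Derive (cheb k) z.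
Definition cheb'' (k : nat) (z : R) : R := Derive_n (cheb k) 2 z.

Definition w0_1 (s : nat) : R := 1 + (5 / 100) / (INR s) ^ 2.
Definition w1_1 (s : nat) : R := cheb s (w0_1 s) / cheb' s (w0_1 s).
Definition mu1_1 (s : nat) : R := w1_1 s / w0_1 s.
Definition mu_1 (s l : nat) : R :=
  2 * w1_1 s * cheb (l - 1) (w0_1 s) / cheb l (w0_1 s).
Definition nu_1 (s l : nat) : R :=
  2 * w0_1 s * cheb (l - 1) (w0_1 s) / cheb l (w0_1 s).
Definition kappa_1 (s l : nat) : R := 1 - nu_1 s l.

(** RKC2 coefficients, eta = 0.15; b_0, b_1 and mu^_1 are the method's
    free low-index constants. *)
Definition w0_2 (s : nat) : R := 1 + (15 / 100) / (INR s) ^ 2.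
Definition w2_2 (s : nat) : R := cheb' s (w0_2 s) / cheb'' s (w0_2 s).
Definition bcoef (s : nat) (b0 b1 : R) (l : nat) : R :=
  match l with
  | O => b0
  | S O => b1
  | _ => cheb'' l (w0_2 s) / (cheb' l (w0_2 s)) ^ 2
  end.
Definition acoef (s : nat) (b0 b1 : R) (l : nat) : R :=
  1 - bcoef s b0 b1 l * cheb l (w0_2 s).
Definition muh (s : nat) (b0 b1 : R) (l : nat) : R :=
  2 * bcoef s b0 b1 l * w2_2 s / bcoef s b0 b1 (l - 1).
Definition nuh (s : nat) (b0 b1 : R) (l : nat) : R :=
  2 * bcoef s b0 b1 l * w0_2 s / bcoef s b0 b1 (l - 1).
Definition kappah (s : nat) (b0 b1 : R) (l : nat) : R :=
  - bcoef s b0 b1 l / bcoef s b0 b1 (l - 2).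

Inductive scheme := RKC1 | RKC2.

Definition lin2 (a : R) (f : Z -> R) (b : R) (g : Z -> R) : Z -> R :=
  fun j => a * f j + b * g j.

(** stages sch Q s c muh1 b0 b1 f l = (K^(l), K^(l+1)), with K^(0) = f and
    c = dt * nu (so c * Q(K) = dt * nu * Q(K)). *)
Fixpoint stages (sch : scheme) (Q : (Z -> R) -> (Z -> R)) (s : nat) (c : R)
    (muh1 b0 b1 : R) (f : Z -> R) (l : nat) : (Z -> R) * (Z -> R) :=
  match l with
  | O =>
    match sch with
    | RKC1 => (f, fun j => f j + mu1_1 s * c * Q f j)
    | RKC2 => (f, fun j => f j + muh1 * c * Q f j)
    end
  | S l' =>
    let (Km2, Km1) := stages sch Q s c muh1 b0 b1 f l' in
    let ell := (l' + 2)%nat in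
    (Km1,
     match sch with
     | RKC1 => fun j => kappa_1 s ell * Km2 j + nu_1 s ell * Km1 j
                       + mu_1 s ell * c * Q Km1 j
     | RKC2 => fun j =>
         (1 - kappah s b0 b1 ell - nuh s b0 b1 ell) * f j
         + kappah s b0 b1 ell * Km2 j + nuh s b0 b1 ell * Km1 j
         + muh s b0 b1 ell * c * Q Km1 j
         - acoef s b0 b1 (ell - 1) * muh s b0 b1 ell * c * Q f j
     end)
  end.

Definition stage sch Q s c muh1 b0 b1 f l : Z -> R :=
  fst (stages sch Q s c muh1 b0 b1 f l).

Definition rk_step sch Q s c muh1 b0 b1 (f : Z -> R) : Z -> R :=
  stage sch Q s c muh1 b0 b1 f s.

Fixpoint fsol sch Q s c muh1 b0 b1 (f0 : Z -> R) (n : nat) : Z -> R :=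
  match n with
  | O => f0
  | S n' => rk_step sch Q s c muh1 b0 b1 (fsol sch Q s c muh1 b0 b1 f0 n')
  end.

Definition mom0 (f : Z -> R) : R := zsum f.
Definition mom1 (dv : R) (f : Z -> R) : R := zsum (fun j => vgrid dv j * f j).
Definition mom2 (dv : R) (f : Z -> R) : R := zsum (fun j => vgrid dv j ^ 2 / 2 * f j).

From Stdlib Require Import Reals ZArith Lia Lra.
From Coquelicot Require Import Coquelicot.
Open Scope R_scope.

(** Both discrete Fokker-Planck operators have the conservation form
    [Q(f)_j = (F_j - F_{j-1}) / dv + D (f_{j+1} - 2 f_j + f_{j-1}) + ...] with a flux
    [F_j = (v_{j+1/2} - u) m_j], where [m] is the second- resp. fourth-order interpolant of
    [f] at the half points.  Summation by parts moves the differences onto a quadratic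
    weight [phi(v) = a + b v + c v^2], whose forward difference is [dv (b + 2 c v_{j+1/2})]
    and whose second difference is the constant [2 c dv^2].  With [N = sum_j f_j], the
    [phi]-moment of [Q(f)] is therefore [- sum_j (b + 2 c v_{j+1/2}) F_j + 2 c T N], which
    vanishes by the very definitions of [u] and [T]: [sum_j (v_{j+1/2} - u) m_j = 0] and
    [sum_j v_{j+1/2} (v_{j+1/2} - u) m_j = T N].  For the fourth-order operator the
    five-point stencil is [24 D2 - D2^2] ([D2] the second difference) and the dots stand for
    multiples of [D2 (D2 f)] and [D2 (Q_2 f)], whose [phi]-moments are [2 c dv^2] times
    [sum_j (D2 f)_j = 0] and [sum_j Q_2(f)_j = 0].
    Every RKC stage is an affine combination (coefficients summing to one) of [f^n] and
    earlier stages plus multiples of [Q] of stages, so all stages, and [f^{n+1}], carry the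
    quadratic moments of [f^n].
    Absolute convergence is tracked with the weights [(1 + |j|)^d]: admissible sequences
    have finite weighted norm for [d = 3], and every operation used either preserves the
    weight or trades part of it for a factor of polynomial growth. *)

(** * Sums over Z *)

Lemma zsum_ext (g h : Z -> R) : (forall j, g j = h j) -> zsum g = zsum h.
Proof. intros E; unfold zsum; f_equal; apply Series_ext; intros n; apply E. Qed.

Lemma zsummable_ext (g h : Z -> R) : (forall j, g j = h j) -> zsummable g -> zsummable h.
Proof.
  intros E [Hp Hn]; split; [revert Hp | revert Hn]; apply ex_series_ext; intros n; now rewrite E.
Qed.

Lemma zsummable_le (g h : Z -> R) : (forall j, Rabs (h j) <= g j) -> zsummable g -> zsummable h.
Proof.
  intros Hle [Hp Hn]; split; [revert Hp | revert Hn];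
    apply (@ex_series_le R_AbsRing R_CompleteNormedModule);
    intros n; unfold norm; simpl; unfold abs; simpl; rewrite Rabs_Rabsolu;
    (eapply Rle_trans; [apply Hle | apply RRle_abs]).
Qed.

Lemma zsummable_abs (g : Z -> R) : zsummable g -> zsummable (fun j => Rabs (g j)).
Proof.
  intros [Hp Hn]; split; [revert Hp | revert Hn]; apply ex_series_ext; intros n;
    now rewrite Rabs_Rabsolu.
Qed.

Lemma zsummable_plus (g h : Z -> R) :
  zsummable g -> zsummable h -> zsummable (fun j => g j + h j).
Proof.
  intros [Hg Hg'] [Hh Hh']; split;
    [generalize (ex_series_plus _ _ Hg Hh) | generalize (ex_series_plus _ _ Hg' Hh')];
    apply (@ex_series_le R_AbsRing R_CompleteNormedModule); intros n;
    unfold norm, plus; simpl; unfold abs; simpl; rewrite Rabs_Rabsolu; apply Rabs_triang.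
Qed.

Lemma zsummable_scal (a : R) (g : Z -> R) : zsummable g -> zsummable (fun j => a * g j).
Proof.
  intros [Hg Hg']; split;
    [generalize (ex_series_scal_l (Rabs a) _ Hg) | generalize (ex_series_scal_l (Rabs a) _ Hg')];
    apply ex_series_ext; intros n; unfold scal; simpl; unfold mult; simpl;
    now rewrite Rabs_mult.
Qed.

Lemma zsummable_minus (g h : Z -> R) :
  zsummable g -> zsummable h -> zsummable (fun j => g j - h j).
Proof.
  intros Hg Hh; apply (zsummable_ext (fun j => g j + -1 * h j)); [intros; ring|].
  now apply zsummable_plus, zsummable_scal.
Qed.

Lemma zsum_plus (g h : Z -> R) :
  zsummable g -> zsummable h -> zsum (fun j => g j + h j) = zsum g + zsum h.
Proof.
  intros [Hg Hg'] [Hh Hh']; unfold zsum.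
  rewrite !Series_plus by now apply ex_series_Rabs. ring.
Qed.

Lemma zsum_scal (a : R) (g : Z -> R) : zsum (fun j => a * g j) = a * zsum g.
Proof. unfold zsum; rewrite !Series_scal_l; ring. Qed.

Lemma zsum_minus (g h : Z -> R) :
  zsummable g -> zsummable h -> zsum (fun j => g j - h j) = zsum g - zsum h.
Proof.
  intros Hg Hh; rewrite (zsum_ext _ (fun j => g j + -1 * h j)) by (intros; ring).
  rewrite zsum_plus, zsum_scal by now try apply zsummable_scal. ring.
Qed.

Lemma zsummable_shift1 (g : Z -> R) : zsummable g -> zsummable (fun j => g (j + 1)%Z).
Proof.
  intros [Hp Hn]; split.
  - apply ex_series_incr_1 in Hp; revert Hp; apply ex_series_ext; intros n.
    do 2 f_equal; lia.
  - apply ex_series_incr_1; revert Hn; apply ex_series_ext; intros n.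
    do 2 f_equal; lia.
Qed.

Lemma zsummable_shiftm1 (g : Z -> R) : zsummable g -> zsummable (fun j => g (j - 1)%Z).
Proof.
  intros [Hp Hn]; split.
  - apply ex_series_incr_1; revert Hp; apply ex_series_ext; intros n.
    do 2 f_equal; lia.
  - apply ex_series_incr_1 in Hn; revert Hn; apply ex_series_ext; intros n.
    do 2 f_equal; lia.
Qed.

(* Shifting by one moves the term [g 0] from the negative to the nonnegative half of [zsum]. *)
Lemma zsum_shift1 (g : Z -> R) : zsummable g -> zsum (fun j => g (j + 1)%Z) = zsum g.
Proof.
  intros [Hp Hn]; apply ex_series_Rabs in Hp, Hn; unfold zsum.
  rewrite (Series_incr_1 (fun n => g (Z.of_nat n))) by exact Hp.
  rewrite (Series_incr_1 (fun n => g (- Z.of_nat n - 1 + 1)%Z)).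
  2: { apply ex_series_incr_1; revert Hn; apply ex_series_ext; intros n; f_equal; lia. }
  rewrite (Series_ext _ (fun n => g (Z.of_nat (S n)))) by (intros; f_equal; lia).
  rewrite (Series_ext (fun n => g (- Z.of_nat (S n) - 1 + 1)%Z) (fun n => g (- Z.of_nat n - 1)%Z))
    by (intros; f_equal; lia).
  simpl; ring.
Qed.

Lemma zsummable_shift (g : Z -> R) (k : Z) : zsummable g -> zsummable (fun j => g (j + k)%Z).
Proof.
  revert g; induction k using Z.peano_ind; intros g Hg.
  - revert Hg; apply zsummable_ext; intros j; f_equal; lia.
  - apply IHk, zsummable_shift1 in Hg; revert Hg; apply zsummable_ext; intros j; f_equal; lia.
  - apply IHk, zsummable_shiftm1 in Hg; revert Hg; apply zsummable_ext; intros j; f_equal; lia.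
Qed.

Lemma zsum_shift (g : Z -> R) (k : Z) : zsummable g -> zsum (fun j => g (j + k)%Z) = zsum g.
Proof.
  revert g; induction k using Z.peano_ind; intros g Hg.
  - apply zsum_ext; intros j; f_equal; lia.
  - rewrite <- (IHk g Hg), <- (zsum_shift1 (fun j => g (j + k)%Z)) by now apply zsummable_shift.
    apply zsum_ext; intros j; f_equal; lia.
  - rewrite <- (IHk g Hg), <- (zsum_shift1 (fun j => g (j + Z.pred k)%Z))
      by now apply zsummable_shift.
    apply zsum_ext; intros j; f_equal; lia.
Qed.

Lemma zsum_shift_sub (g : Z -> R) (k : Z) : zsummable g -> zsum (fun j => g (j - k)%Z) = zsum g.
Proof. intros Hg; rewrite <- (zsum_shift g (- k) Hg); apply zsum_ext; intros j; f_equal; lia. Qed.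

(** * Weighted summability and polynomial growth *)

Definition bracket (j : Z) : R := 1 + Rabs (IZR j).

Definition wsummable (d : nat) (g : Z -> R) : Prop := zsummable (fun j => bracket j ^ d * g j).

Definition poly_growth (e : nat) (phi : Z -> R) : Prop :=
  exists C, forall j, Rabs (phi j) <= C * bracket j ^ e.

Lemma bracket_ge1 (j : Z) : 1 <= bracket j.
Proof. unfold bracket; generalize (Rabs_pos (IZR j)); lra. Qed.

Lemma Rabs_bracket_pow (j : Z) (d : nat) : Rabs (bracket j ^ d) = bracket j ^ d.
Proof. apply Rabs_right, Rle_ge, pow_le; generalize (bracket_ge1 j); lra. Qed.

Lemma bracket_add (j k : Z) : bracket (j + k) <= bracket j * bracket k.
Proof.
  unfold bracket; rewrite plus_IZR.
  generalize (Rabs_triang (IZR j) (IZR k)) (Rabs_pos (IZR j)) (Rabs_pos (IZR k)); nra.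
Qed.

Lemma wsummable_ext (d : nat) (g h : Z -> R) :
  (forall j, g j = h j) -> wsummable d g -> wsummable d h.
Proof. intros E; apply zsummable_ext; intros j; now rewrite E. Qed.

Lemma wsummable_mono (d d' : nat) (g : Z -> R) :
  (d <= d')%nat -> wsummable d' g -> wsummable d g.
Proof.
  intros Hd Hg; apply zsummable_abs in Hg; revert Hg; apply zsummable_le; intros j.
  rewrite !Rabs_mult, !Rabs_bracket_pow.
  apply Rmult_le_compat_r; [apply Rabs_pos | apply Rle_pow; [apply bracket_ge1 | exact Hd]].
Qed.

Lemma wsummable_zsummable (d : nat) (g : Z -> R) : wsummable d g -> zsummable g.
Proof.
  intros Hg; apply (wsummable_mono 0 d) in Hg; [|lia].
  revert Hg; apply zsummable_ext; intros j; simpl; ring.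
Qed.

Lemma wsummable_plus (d : nat) (g h : Z -> R) :
  wsummable d g -> wsummable d h -> wsummable d (fun j => g j + h j).
Proof.
  intros Hg Hh; generalize (zsummable_plus _ _ Hg Hh); apply zsummable_ext; intros j; ring.
Qed.

Lemma wsummable_minus (d : nat) (g h : Z -> R) :
  wsummable d g -> wsummable d h -> wsummable d (fun j => g j - h j).
Proof.
  intros Hg Hh; generalize (zsummable_minus _ _ Hg Hh); apply zsummable_ext; intros j; ring.
Qed.

Lemma wsummable_scal (d : nat) (a : R) (g : Z -> R) :
  wsummable d g -> wsummable d (fun j => a * g j).
Proof. intros Hg; generalize (zsummable_scal a _ Hg); apply zsummable_ext; intros j; ring. Qed.

Lemma wsummable_divr (d : nat) (a : R) (g : Z -> R) :
  wsummable d g -> wsummable d (fun j => g j / a).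
Proof.
  intros Hg; generalize (zsummable_scal (/ a) _ Hg); apply zsummable_ext; intros j.
  unfold Rdiv; ring.
Qed.

Lemma wsummable_shift (d : nat) (g : Z -> R) (k : Z) :
  wsummable d g -> wsummable d (fun j => g (j + k)%Z).
Proof.
  intros Hg.
  apply (zsummable_le (fun j => bracket (- k) ^ d * Rabs (bracket (j + k) ^ d * g (j + k)%Z))).
  - intros j; rewrite !Rabs_mult, !Rabs_bracket_pow, <- Rmult_assoc, <- Rpow_mult_distr.
    apply Rmult_le_compat_r; [apply Rabs_pos|].
    apply pow_incr; split; [generalize (bracket_ge1 j); lra|].
    replace j with (j + k + - k)%Z at 1 by lia; rewrite Rmult_comm; apply bracket_add.
  - now apply zsummable_scal, zsummable_abs, (zsummable_shift (fun j => bracket j ^ d * g j)).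
Qed.

Lemma wsummable_shift_sub (d : nat) (g : Z -> R) (k : Z) :
  wsummable d g -> wsummable d (fun j => g (j - k)%Z).
Proof. exact (fun Hg => wsummable_shift d g (- k) Hg). Qed.

Lemma wsummable_mul (e d : nat) (phi g : Z -> R) :
  poly_growth e phi -> wsummable (d + e) g -> wsummable d (fun j => phi j * g j).
Proof.
  intros [C HC] Hg; apply zsummable_abs, (zsummable_scal C) in Hg; revert Hg.
  apply zsummable_le; intros j.
  rewrite !Rabs_mult, !Rabs_bracket_pow, pow_add.
  replace (C * (bracket j ^ d * bracket j ^ e * Rabs (g j)))
    with (bracket j ^ d * Rabs (g j) * (C * bracket j ^ e)) by ring.
  replace (bracket j ^ d * (Rabs (phi j) * Rabs (g j)))
    with (bracket j ^ d * Rabs (g j) * Rabs (phi j)) by ring.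
  apply Rmult_le_compat_l; [|apply HC].
  apply Rmult_le_pos; [rewrite <- Rabs_bracket_pow|]; apply Rabs_pos.
Qed.

Lemma poly_growth_ext (e : nat) (phi psi : Z -> R) :
  (forall j, phi j = psi j) -> poly_growth e phi -> poly_growth e psi.
Proof. intros E [C HC]; exists C; intros j; rewrite <- E; apply HC. Qed.

Lemma poly_growth_nonneg (e : nat) (phi : Z -> R) (C : R) :
  (forall j, Rabs (phi j) <= C * bracket j ^ e) -> 0 <= C.
Proof.
  intros HC; specialize (HC 0%Z); generalize (Rabs_pos (phi 0%Z)).
  unfold bracket in HC; rewrite Rabs_R0, Rplus_0_r, pow1 in HC; lra.
Qed.

Lemma poly_growth_mono (e e' : nat) (phi : Z -> R) :
  (e <= e')%nat -> poly_growth e phi -> poly_growth e' phi.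
Proof.
  intros He [C HC]; exists C; intros j; eapply Rle_trans; [apply HC|].
  apply Rmult_le_compat_l; [exact (poly_growth_nonneg _ _ _ HC)|].
  apply Rle_pow; [apply bracket_ge1 | exact He].
Qed.

Lemma poly_growth_plus (e : nat) (phi psi : Z -> R) :
  poly_growth e phi -> poly_growth e psi -> poly_growth e (fun j => phi j + psi j).
Proof.
  intros [C HC] [D HD]; exists (C + D); intros j.
  eapply Rle_trans; [apply Rabs_triang|]; specialize (HC j); specialize (HD j); lra.
Qed.

Lemma poly_growth_mul (e e' : nat) (phi psi : Z -> R) :
  poly_growth e phi -> poly_growth e' psi -> poly_growth (e + e') (fun j => phi j * psi j).
Proof.
  intros [C HC] [D HD]; exists (C * D); intros j.
  rewrite Rabs_mult, pow_add.
  replace (C * D * (bracket j ^ e * bracket j ^ e'))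
    with ((C * bracket j ^ e) * (D * bracket j ^ e')) by ring.
  apply Rmult_le_compat; auto using Rabs_pos.
Qed.

Lemma poly_growth_affine (a b : R) : poly_growth 1 (fun j => a * IZR j + b).
Proof.
  exists (Rabs a + Rabs b); intros j; unfold bracket; rewrite pow_1.
  eapply Rle_trans; [apply Rabs_triang|]; rewrite Rabs_mult.
  generalize (Rabs_pos a) (Rabs_pos b) (Rabs_pos (IZR j)); nra.
Qed.

Lemma poly_growth_shift (e : nat) (phi : Z -> R) (k : Z) :
  poly_growth e phi -> poly_growth e (fun j => phi (j + k)%Z).
Proof.
  intros [C HC]; exists (C * bracket k ^ e); intros j.
  eapply Rle_trans; [apply HC|].
  rewrite Rmult_assoc, <- Rpow_mult_distr.
  apply Rmult_le_compat_l; [exact (poly_growth_nonneg _ _ _ HC)|].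
  apply pow_incr; split; [generalize (bracket_ge1 (j + k)); lra|].
  rewrite Rmult_comm; apply bracket_add.
Qed.

Lemma zsummable_mul_growth (e : nat) (phi g : Z -> R) :
  poly_growth e phi -> wsummable e g -> zsummable (fun j => phi j * g j).
Proof. intros Hphi Hg; exact (wsummable_zsummable 0 _ (wsummable_mul e 0 phi g Hphi Hg)). Qed.

(** * Summation by parts *)

Lemma zsummable_mul_shift (phi h : Z -> R) :
  zsummable (fun j => phi (j + 1)%Z * h j) -> zsummable (fun j => phi j * h (j - 1)%Z).
Proof.
  intros H; generalize (zsummable_shift _ (-1) H); apply zsummable_ext; intros j.
  f_equal; f_equal; lia.
Qed.

Lemma zsum_mul_shift (phi h : Z -> R) :
  zsummable (fun j => phi (j + 1)%Z * h j) ->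
  zsum (fun j => phi j * h (j - 1)%Z) = zsum (fun j => phi (j + 1)%Z * h j).
Proof.
  intros H; rewrite <- (zsum_shift _ (-1) H); apply zsum_ext; intros j.
  f_equal; f_equal; lia.
Qed.

Lemma zsum_mul_bdiff (phi F : Z -> R) :
  zsummable (fun j => phi j * F j) -> zsummable (fun j => phi (j + 1)%Z * F j) ->
  zsum (fun j => phi j * (F j - F (j - 1)%Z))
  = - zsum (fun j => (phi (j + 1)%Z - phi j) * F j).
Proof.
  intros H0 H1.
  rewrite (zsum_ext _ (fun j => phi j * F j - phi j * F (j - 1)%Z)) by (intros; ring).
  rewrite (zsum_ext (fun j => (phi (j + 1)%Z - phi j) * F j)
             (fun j => phi (j + 1)%Z * F j - phi j * F j)) by (intros; ring).
  rewrite !zsum_minus, zsum_mul_shift by auto using zsummable_mul_shift.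
  ring.
Qed.

Definition diff2 (h : Z -> R) (j : Z) : R := h (j + 1)%Z - 2 * h j + h (j - 1)%Z.

Lemma zsum_mul_diff2 (phi h : Z -> R) :
  zsummable (fun j => phi j * h j) -> zsummable (fun j => phi (j + 1)%Z * h j) ->
  zsummable (fun j => phi j * h (j + 1)%Z) ->
  zsum (fun j => phi j * diff2 h j) = zsum (fun j => diff2 phi j * h j).
Proof.
  intros H0 Hr Hl.
  assert (Hl' : zsummable (fun j => h (j + 1)%Z * phi j))
    by (revert Hl; apply zsummable_ext; intros; ring).
  assert (Hphih : zsummable (fun j => phi (j - 1)%Z * h j)).
  { generalize (zsummable_mul_shift _ _ Hl'); apply zsummable_ext; intros; ring. }
  assert (E : zsum (fun j => phi j * h (j + 1)%Z) = zsum (fun j => phi (j - 1)%Z * h j)).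
  { rewrite (zsum_ext _ (fun j => h (j + 1)%Z * phi j)) by (intros; ring).
    rewrite <- zsum_mul_shift by exact Hl'.
    apply zsum_ext; intros; ring. }
  unfold diff2.
  rewrite (zsum_ext _ (fun j => phi j * h (j + 1)%Z - 2 * (phi j * h j) + phi j * h (j - 1)%Z))
    by (intros; ring).
  rewrite (zsum_ext (fun j => (phi (j + 1)%Z - 2 * phi j + phi (j - 1)%Z) * h j)
             (fun j => phi (j + 1)%Z * h j - 2 * (phi j * h j) + phi (j - 1)%Z * h j))
    by (intros; ring).
  rewrite !zsum_plus, !zsum_minus, !zsum_scal, zsum_mul_shift, E
    by auto using zsummable_minus, zsummable_scal, zsummable_mul_shift.
  ring.
Qed.

Lemma zsum_diff2 (h : Z -> R) : zsummable h -> zsum (diff2 h) = 0.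
Proof.
  intros Hh; unfold diff2.
  rewrite !zsum_plus, !zsum_minus, zsum_scal, zsum_shift, zsum_shift_sub
    by auto using zsummable_minus, zsummable_scal, zsummable_shift, zsummable_shiftm1.
  ring.
Qed.

(** * Moments against quadratic weights *)

Definition moment (phi g : Z -> R) : R := zsum (fun j => phi j * g j).

Lemma moment_ext (phi g h : Z -> R) : (forall j, g j = h j) -> moment phi g = moment phi h.
Proof. intros E; apply zsum_ext; intros j; now rewrite E. Qed.

Lemma moment_plus (phi g h : Z -> R) :
  poly_growth 2 phi -> wsummable 2 g -> wsummable 2 h ->
  moment phi (fun j => g j + h j) = moment phi g + moment phi h.
Proof.
  intros Hphi Hg Hh; unfold moment.
  rewrite (zsum_ext _ (fun j => phi j * g j + phi j * h j)) by (intros; ring).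
  apply zsum_plus; now apply (zsummable_mul_growth 2).
Qed.

Lemma moment_minus (phi g h : Z -> R) :
  poly_growth 2 phi -> wsummable 2 g -> wsummable 2 h ->
  moment phi (fun j => g j - h j) = moment phi g - moment phi h.
Proof.
  intros Hphi Hg Hh; unfold moment.
  rewrite (zsum_ext _ (fun j => phi j * g j - phi j * h j)) by (intros; ring).
  apply zsum_minus; now apply (zsummable_mul_growth 2).
Qed.

Lemma moment_scal (phi : Z -> R) (a : R) (g : Z -> R) :
  moment phi (fun j => a * g j) = a * moment phi g.
Proof.
  unfold moment; rewrite <- zsum_scal; apply zsum_ext; intros j; ring.
Qed.

Definition quad_weight (dv a b c : R) (j : Z) : R := a + b * vgrid dv j + c * vgrid dv j ^ 2.

Lemma poly_growth_quad_weight (dv a b c : R) : poly_growth 2 (quad_weight dv a b c).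
Proof.
  apply (poly_growth_ext 2 (fun j => (0 * IZR j + a) + (c * dv * IZR j + b) * (dv * IZR j + 0))).
  - intros j; unfold quad_weight, vgrid; ring.
  - apply poly_growth_plus.
    + apply (poly_growth_mono 1); [lia | apply poly_growth_affine].
    + apply (poly_growth_mul 1 1); apply poly_growth_affine.
Qed.

Lemma quad_weight_diff (dv a b c : R) (j : Z) :
  quad_weight dv a b c (j + 1) - quad_weight dv a b c j = dv * (b + 2 * c * vhalf dv j).
Proof. unfold quad_weight, vhalf, vgrid; rewrite plus_IZR; field. Qed.

Lemma diff2_quad_weight (dv a b c : R) (j : Z) : diff2 (quad_weight dv a b c) j = 2 * c * dv ^ 2.
Proof. unfold diff2, quad_weight, vgrid; rewrite plus_IZR, minus_IZR; ring. Qed.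

Lemma wsummable_diff2 (d : nat) (h : Z -> R) : wsummable d h -> wsummable d (diff2 h).
Proof.
  intros Hh; unfold diff2.
  apply wsummable_plus; [apply wsummable_minus; [|apply wsummable_scal]|];
    auto using wsummable_shift, wsummable_shift_sub.
Qed.

Ltac wsum :=
  repeat match goal with
  | |- wsummable _ (diff2 _) => apply wsummable_diff2
  | |- wsummable _ (fun j => @?A j - @?B j) => apply wsummable_minus
  | |- wsummable _ (fun j => @?A j + @?B j) => apply wsummable_plus
  | |- wsummable _ (fun j => @?A j / _) => apply wsummable_divr
  | |- wsummable _ (fun j => _ * @?A j) => apply wsummable_scal
  | |- wsummable _ (fun j => _ (j + _)%Z) => apply wsummable_shift
  | |- wsummable _ (fun j => _ (j - _)%Z) => apply wsummable_shift_sub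
  | |- wsummable _ _ => first [assumption | eapply wsummable_mono; [|eassumption]; lia]
  | |- _ => assumption
  end.

Lemma moment_quad_weight_diff2 (dv a b c : R) (h : Z -> R) :
  wsummable 2 h -> moment (quad_weight dv a b c) (diff2 h) = 2 * c * dv ^ 2 * zsum h.
Proof.
  intros Hh; unfold moment.
  assert (Hw := poly_growth_quad_weight dv a b c).
  rewrite zsum_mul_diff2.
  - rewrite <- zsum_scal; apply zsum_ext; intros j; now rewrite diff2_quad_weight.
  - now apply (zsummable_mul_growth 2).
  - apply (zsummable_mul_growth 2); [now apply poly_growth_shift | exact Hh].
  - apply (zsummable_mul_growth 2); [exact Hw | now apply wsummable_shift].
Qed.

Lemma moment_quad_weight_bdiff (dv a b c : R) (F : Z -> R) :
  dv <> 0 -> wsummable 2 F ->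
  moment (quad_weight dv a b c) (fun j => (F j - F (j - 1)%Z) / dv)
  = - zsum (fun j => (b + 2 * c * vhalf dv j) * F j).
Proof.
  intros Hdv HF; unfold moment.
  assert (Hw := poly_growth_quad_weight dv a b c).
  rewrite (zsum_ext _ (fun j => / dv * (quad_weight dv a b c j * (F j - F (j - 1)%Z))))
    by (intros; field; exact Hdv).
  rewrite zsum_scal, zsum_mul_bdiff.
  - rewrite (zsum_ext _ (fun j => dv * ((b + 2 * c * vhalf dv j) * F j)))
      by (intros; rewrite quad_weight_diff; ring).
    rewrite zsum_scal; field; exact Hdv.
  - now apply (zsummable_mul_growth 2).
  - apply (zsummable_mul_growth 2); [now apply poly_growth_shift | exact HF].
Qed.

Lemma moment_quad_weight_1 (dv : R) (g : Z -> R) : moment (quad_weight dv 1 0 0) g = zsum g.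
Proof. apply zsum_ext; intros j; unfold quad_weight; ring. Qed.

(** * The discrete Fokker-Planck operators *)

Lemma zsum_affine_mul_flux (v m F : Z -> R) (n u T b c : R) :
  (forall j, F j = (v j - u) * m j) ->
  zsummable m -> zsummable (fun j => v j * m j) -> zsummable (fun j => (v j - u) ^ 2 * m j) ->
  zsum m = n -> u * n = zsum (fun j => v j * m j) ->
  T * n = zsum (fun j => (v j - u) ^ 2 * m j) ->
  zsum (fun j => (b + 2 * c * v j) * F j) = 2 * c * T * n.
Proof.
  intros HF Hm Hvm Hv2m Hn Hu HT.
  rewrite (zsum_ext _ (fun j => (b + 2 * c * u) * (v j * m j - u * m j)
                                + 2 * c * ((v j - u) ^ 2 * m j)))
    by (intros; rewrite HF; ring).
  rewrite zsum_plus, !zsum_scal, zsum_minus, zsum_scal, <- Hu, <- HT, Hn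
    by auto using zsummable_scal, zsummable_minus.
  ring.
Qed.

Lemma poly_growth_vhalf_sub (dv u : R) : poly_growth 1 (fun j => vhalf dv j - u).
Proof.
  apply (poly_growth_ext 1 (fun j => dv * IZR j + (dv / 2 - u))); [|apply poly_growth_affine].
  intros j; unfold vhalf, vgrid; rewrite plus_IZR; field.
Qed.

Lemma zsummable_flux_moments (dv u : R) (m : Z -> R) :
  wsummable 2 m ->
  zsummable m /\ zsummable (fun j => vhalf dv j * m j)
  /\ zsummable (fun j => (vhalf dv j - u) ^ 2 * m j).
Proof.
  intros Hm; split; [|split].
  - exact (wsummable_zsummable _ _ Hm).
  - apply (zsummable_ext (fun j => (vhalf dv j - 0) * m j)); [intros; ring|].
    apply (zsummable_mul_growth 1); [apply poly_growth_vhalf_sub|].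
    apply (wsummable_mono 1 2); [lia | exact Hm].
  - apply (zsummable_mul_growth 2); [|exact Hm].
    apply (poly_growth_ext 2 (fun j => (vhalf dv j - u) * (vhalf dv j - u))); [intros; ring|].
    apply (poly_growth_mul 1 1); apply poly_growth_vhalf_sub.
Qed.

Lemma zsum_fhalf (g : Z -> R) : zsummable g -> zsum (fhalf g) = zsum g.
Proof.
  intros Hg; unfold fhalf.
  rewrite (zsum_ext _ (fun j => / 2 * g (j + 1)%Z + / 2 * g j)) by (intros; field).
  rewrite zsum_plus, !zsum_scal, zsum_shift by auto using zsummable_scal, zsummable_shift.
  field.
Qed.

Lemma zsum_fbreve (g : Z -> R) : zsummable g -> zsum (fbreve g) = zsum g.
Proof.
  intros Hg; unfold fbreve.
  rewrite !zsum_minus, !zsum_plus, !zsum_scal, !zsum_shift, zsum_shift_sub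
    by auto using zsummable_scal, zsummable_shift, zsummable_shiftm1, zsummable_plus.
  field.
Qed.

Lemma wsummable_fhalf (d : nat) (g : Z -> R) : wsummable d g -> wsummable d (fhalf g).
Proof. intros Hg; unfold fhalf; wsum. Qed.

Lemma wsummable_fbreve (d : nat) (g : Z -> R) : wsummable d g -> wsummable d (fbreve g).
Proof. intros Hg; unfold fbreve; wsum. Qed.

Definition flux2 (dv : R) (g : Z -> R) (j : Z) : R := fhalf g j * (vhalf dv j - u2 dv g).

Definition flux4 (dv : R) (g : Z -> R) (j : Z) : R := (vhalf dv j - u4 dv g) * fbreve g j.

Lemma Q2_flux_form (dv : R) (g : Z -> R) (j : Z) :
  Q2 dv g j = (flux2 dv g j - flux2 dv g (j - 1)%Z) / dv + T2 dv g / dv ^ 2 * diff2 g j.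
Proof. reflexivity. Qed.

Lemma stencil5_diff2 (g : Z -> R) (j : Z) :
  - g (j - 2)%Z + 28 * g (j - 1)%Z - 54 * g j + 28 * g (j + 1)%Z - g (j + 2)%Z
  = 24 * diff2 g j - diff2 (diff2 g) j.
Proof.
  unfold diff2.
  replace (j + 1 + 1)%Z with (j + 2)%Z by lia; replace (j + 1 - 1)%Z with j by lia;
  replace (j - 1 + 1)%Z with j by lia; replace (j - 1 - 1)%Z with (j - 2)%Z by lia.
  ring.
Qed.

Lemma Q4_flux_form (dv : R) (g : Z -> R) (j : Z) :
  dv <> 0 ->
  Q4 dv g j = (flux4 dv g j - flux4 dv g (j - 1)%Z) / dv + T4 dv g / dv ^ 2 * diff2 g j
              - T4 dv g / (24 * dv ^ 2) * diff2 (diff2 g) j - 1 / 24 * diff2 (Q2 dv g) j.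
Proof.
  intros Hdv; unfold Q4, Qbar4; rewrite stencil5_diff2.
  change (diff2 (Q2 dv g) j) with (Q2 dv g (j + 1)%Z - 2 * Q2 dv g j + Q2 dv g (j - 1)%Z).
  unfold flux4; field; exact Hdv.
Qed.

Lemma wsummable_flux2 (dv : R) (g : Z -> R) : wsummable 3 g -> wsummable 2 (flux2 dv g).
Proof.
  intros Hg; apply (wsummable_ext 2 (fun j => (vhalf dv j - u2 dv g) * fhalf g j));
    [intros; unfold flux2; ring|].
  apply (wsummable_mul 1 2); [apply poly_growth_vhalf_sub | now apply wsummable_fhalf].
Qed.

Lemma wsummable_flux4 (dv : R) (g : Z -> R) : wsummable 3 g -> wsummable 2 (flux4 dv g).
Proof.
  intros Hg; apply (wsummable_mul 1 2); [apply poly_growth_vhalf_sub | now apply wsummable_fbreve].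
Qed.

Lemma wsummable_Q2 (dv : R) (g : Z -> R) : wsummable 3 g -> wsummable 2 (Q2 dv g).
Proof.
  intros Hg; assert (HF := wsummable_flux2 dv g Hg).
  apply (wsummable_ext 2 _ _ (fun j => eq_sym (Q2_flux_form dv g j))); wsum.
Qed.

Lemma wsummable_Q4 (dv : R) (g : Z -> R) : dv <> 0 -> wsummable 3 g -> wsummable 2 (Q4 dv g).
Proof.
  intros Hdv Hg; assert (HF := wsummable_flux4 dv g Hg); assert (HQ2 := wsummable_Q2 dv g Hg).
  apply (wsummable_ext 2 _ _ (fun j => eq_sym (Q4_flux_form dv g j Hdv))); wsum.
Qed.

Lemma moment_quad_weight_Q2 (dv a b c : R) (g : Z -> R) :
  dv <> 0 -> wsummable 3 g -> zsum g <> 0 -> moment (quad_weight dv a b c) (Q2 dv g) = 0.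
Proof.
  intros Hdv Hg Hmass.
  assert (Hw := poly_growth_quad_weight dv a b c).
  assert (HF := wsummable_flux2 dv g Hg).
  assert (Hm : wsummable 2 (fhalf g)) by (apply wsummable_fhalf; wsum).
  destruct (zsummable_flux_moments dv (u2 dv g) _ Hm) as (Hm0 & Hm1 & Hm2).
  rewrite (moment_ext _ _ _ (Q2_flux_form dv g)).
  rewrite moment_plus, moment_scal, moment_quad_weight_bdiff, moment_quad_weight_diff2 by wsum.
  rewrite (zsum_affine_mul_flux (vhalf dv) (fhalf g) _ (zsum g) (u2 dv g) (T2 dv g));
    [field; exact Hdv | intros; unfold flux2; ring | auto .. | |].
  - apply zsum_fhalf; exact (wsummable_zsummable _ _ Hg).
  - unfold u2, dens; field; auto.
  - unfold T2, dens; field; auto.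
Qed.

Lemma moment_quad_weight_Q4 (dv a b c : R) (g : Z -> R) :
  dv <> 0 -> wsummable 3 g -> zsum g <> 0 -> moment (quad_weight dv a b c) (Q4 dv g) = 0.
Proof.
  intros Hdv Hg Hmass.
  assert (Hw := poly_growth_quad_weight dv a b c).
  assert (HF := wsummable_flux4 dv g Hg).
  assert (HQ2 := wsummable_Q2 dv g Hg).
  assert (Hm : wsummable 2 (fbreve g)) by (apply wsummable_fbreve; wsum).
  destruct (zsummable_flux_moments dv (u4 dv g) _ Hm) as (Hm0 & Hm1 & Hm2).
  rewrite (moment_ext _ _ _ (fun j => Q4_flux_form dv g j Hdv)).
  rewrite !moment_minus, moment_plus, !moment_scal, moment_quad_weight_bdiff,
    !moment_quad_weight_diff2 by wsum.
  rewrite zsum_diff2 by (apply (wsummable_zsummable 3); exact Hg).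
  rewrite <- (moment_quad_weight_1 dv (Q2 dv g)), moment_quad_weight_Q2 by auto.
  rewrite (zsum_affine_mul_flux (vhalf dv) (fbreve g) _ (zsum g) (u4 dv g) (T4 dv g));
    [field; exact Hdv | intros; unfold flux4; ring | auto .. | |].
  - apply zsum_fbreve; exact (wsummable_zsummable _ _ Hg).
  - unfold u4, dens; field; auto.
  - unfold T4, dens; field; auto.
Qed.

Lemma wsummable_Qop (k : op_kind) (dv : R) (g : Z -> R) :
  dv <> 0 -> wsummable 3 g -> wsummable 2 (Qop k dv g).
Proof. destruct k; [intros _; apply wsummable_Q2 | apply wsummable_Q4]. Qed.

Lemma moment_quad_weight_Qop (k : op_kind) (dv a b c : R) (g : Z -> R) :
  dv <> 0 -> wsummable 3 g -> zsum g <> 0 -> moment (quad_weight dv a b c) (Qop k dv g) = 0.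
Proof. destruct k; [apply moment_quad_weight_Q2 | apply moment_quad_weight_Q4]. Qed.

Lemma wsummable_admissible (k : op_kind) (dv : R) (g : Z -> R) :
  0 < dv -> admissible k dv g -> wsummable 3 g.
Proof.
  intros Hdv [Hmom _].
  apply (zsummable_le (fun j => Rabs (vgrid dv j ^ 0 * g j)
                                + 3 / dv * Rabs (vgrid dv j ^ 1 * g j)
                                + 3 / dv ^ 2 * Rabs (vgrid dv j ^ 2 * g j)
                                + / dv ^ 3 * Rabs (vgrid dv j ^ 3 * g j))).
  - intros j; right.
    rewrite !Rabs_mult, Rabs_bracket_pow, <- !RPow_abs; unfold vgrid, bracket.
    rewrite Rabs_mult, (Rabs_right dv) by lra.
    field; lra.
  - repeat apply zsummable_plus; try apply zsummable_scal; apply zsummable_abs, Hmom; lia.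
Qed.

Lemma admissible_zsum_neq0 (k : op_kind) (dv : R) (g : Z -> R) :
  admissible k dv g -> zsum g <> 0.
Proof. intros [_ [Hn _]] E; unfold dens in Hn; rewrite E in Hn; lra. Qed.

(** * Runge-Kutta-Chebyshev stages *)

Section StageMoments.

Variables (sch : scheme) (Q : (Z -> R) -> Z -> R) (s : nat) (c muh1 b0 b1 : R).
Variables (f phi : Z -> R).

Hypothesis phi_growth : poly_growth 2 phi.
Hypothesis stage_wsummable :
  forall l, (l <= s)%nat -> wsummable 2 (stage sch Q s c muh1 b0 b1 f l).
Hypothesis Q_stage_wsummable :
  forall l, (l <= s)%nat -> wsummable 2 (Q (stage sch Q s c muh1 b0 b1 f l)).
Hypothesis moment_Q_stage :
  forall l, (l <= s)%nat -> moment phi (Q (stage sch Q s c muh1 b0 b1 f l)) = 0.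

Lemma stage_0 : stage sch Q s c muh1 b0 b1 f 0 = f.
Proof. now destruct sch. Qed.

Lemma moment_stages (l : nat) :
  (S l <= s)%nat ->
  moment phi (fst (stages sch Q s c muh1 b0 b1 f l)) = moment phi f /\
  moment phi (snd (stages sch Q s c muh1 b0 b1 f l)) = moment phi f.
Proof.
  pose proof (stage_wsummable 0 (Nat.le_0_l s)) as Hf.
  pose proof (Q_stage_wsummable 0 (Nat.le_0_l s)) as HQf.
  pose proof (moment_Q_stage 0 (Nat.le_0_l s)) as HmQf.
  rewrite stage_0 in Hf, HQf, HmQf.
  induction l as [|l IH]; intros Hl.
  - destruct sch; simpl; split; try reflexivity;
      rewrite moment_plus, moment_scal, HmQf by wsum; ring.
  - destruct (IH ltac:(lia)) as [IH2 IH1].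
    pose proof (stage_wsummable l ltac:(lia)) as H2.
    pose proof (stage_wsummable (S l) ltac:(lia)) as H1.
    pose proof (Q_stage_wsummable (S l) ltac:(lia)) as HQ1.
    pose proof (moment_Q_stage (S l) ltac:(lia)) as HmQ1.
    unfold stage in H2, H1, HQ1, HmQ1; simpl in H1, HQ1, HmQ1 |- *.
    destruct (stages sch Q s c muh1 b0 b1 f l) as [Km2 Km1]; simpl in *.
    split; [exact IH1|].
    destruct sch.
    + rewrite !moment_plus, !moment_scal, IH1, IH2, HmQ1 by wsum.
      unfold kappa_1; ring.
    + rewrite moment_minus, !moment_plus, !moment_scal, IH1, IH2, HmQ1, HmQf by wsum.
      ring.
Qed.

Lemma moment_stage (l : nat) :
  (l <= s)%nat -> moment phi (stage sch Q s c muh1 b0 b1 f l) = moment phi f.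
Proof.
  destruct l as [|l]; intros Hl.
  - now rewrite stage_0.
  - unfold stage; simpl.
    destruct (moment_stages l Hl) as [_ H]; revert H.
    now destruct (stages sch Q s c muh1 b0 b1 f l).
Qed.

End StageMoments.

Lemma moment_quad_weight_rk_step (k : op_kind) (sch : scheme) (dv : R) (s : nat)
  (tau muh1 b0 b1 a b c : R) (g : Z -> R) :
  0 < dv ->
  (forall l, (l <= s)%nat -> admissible k dv (stage sch (Qop k dv) s tau muh1 b0 b1 g l)) ->
  moment (quad_weight dv a b c) (rk_step sch (Qop k dv) s tau muh1 b0 b1 g)
  = moment (quad_weight dv a b c) g.
Proof.
  intros Hdv Hadm; apply moment_stage; [apply poly_growth_quad_weight | intros l Hl .. | lia];
    pose proof (wsummable_admissible _ _ _ Hdv (Hadm l Hl)) as Hl3.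
  - apply (wsummable_mono 2 3); [lia | exact Hl3].
  - apply wsummable_Qop; [lra | exact Hl3].
  - apply moment_quad_weight_Qop; [lra | exact Hl3 |].
    exact (admissible_zsum_neq0 _ _ _ (Hadm l Hl)).
Qed.

Lemma mom_quad_weight (dv : R) (g : Z -> R) :
  mom0 g = moment (quad_weight dv 1 0 0) g /\ mom1 dv g = moment (quad_weight dv 0 1 0) g /\
  mom2 dv g = moment (quad_weight dv 0 0 (1 / 2)) g.
Proof.
  unfold mom0, mom1, mom2, moment, quad_weight.
  repeat split; apply zsum_ext; intros j; field.
Qed.

Theorem proposition3 (k : op_kind) (sch : scheme) (nu dv dt : R) (s : nat)
  (muh1 b0 b1 : R) (f0 : Z -> R) :
  0 < nu -> 0 < dv -> 0 < dt -> (2 <= s)%nat ->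
  (forall (n l : nat), (l <= s)%nat ->
     admissible k dv
       (stage sch (Qop k dv) s (dt * nu) muh1 b0 b1
          (fsol sch (Qop k dv) s (dt * nu) muh1 b0 b1 f0 n) l)) ->
  forall n : nat,
    let fn := fsol sch (Qop k dv) s (dt * nu) muh1 b0 b1 f0 n in
    mom0 fn = mom0 f0 /\ mom1 dv fn = mom1 dv f0 /\ mom2 dv fn = mom2 dv f0.
Proof.
  intros _ Hdv _ _ Hadm n fn.
  assert (Hcons : forall a b c,
            moment (quad_weight dv a b c) fn = moment (quad_weight dv a b c) f0).
  { intros a b c; unfold fn; induction n as [|n IH]; [reflexivity|].
    simpl; rewrite moment_quad_weight_rk_step; auto. }
  destruct (mom_quad_weight dv fn) as (-> & -> & ->).
  destruct (mom_quad_weight dv f0) as (-> & -> & ->).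
  auto.
Qed.
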